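(* Let $(H,wt)$ be a weighted graph. For each $a\in V(H)$ take a copy of $C_{wt(a)}$ and fix a vertex $v(a)$ of it, and let $G$ be the disjoint union of these copies together with a dashed edge $v(a)\dashrightarrow v(b)$ for each edge $ab\in E(H)$. Then $X_{(H,wt)}(x)=\mathscr{X}_G(x)$.
   Context: A weighted graph is a finite simple graph $H$ with $wt:V(H)\to\mathbb{P}$; its extended chromatic symmetric function is $X_{(H,wt)}(x)=\sum_\kappa\prod_{a\in V(H)}x_{\kappa(a)}^{wt(a)}$ over proper colourings $\kappa:V(H)\to\mathbb{P}$ of $H$ (adjacent vertices get different colours). $C_m$ is the directed cycle on $m$ vertices all of whose edges are double (for $m=1$ a single vertex with no edges). An edge-coloured digraph is a finite simple digraph with each edge dashed ($\dashrightarrow$), solid ($\rightarrow$) or double ($\Rightarrow$); its proper vertex-colourings are $\kappa:V\to\mathbb{P}$ with $\kappa(a)\ne\kappa(b)$, $\kappa(a)<\kappa(b)$, $\kappa(a)\le\kappa(b)$ for dashed, solid, double edges $(a,b)$ respectively, and $\mathscr{X}_G(x)=\sum_\kappa\prod_{a}x_{\kappa(a)}$ over them. *)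

From HB Require Import structures.
From mathcomp Require Import all_boot all_order all_algebra.
From mathcomp.multinomials Require Import mpoly.
Set Implicit Arguments. Unset Strict Implicit. Unset Printing Implicit Defensive.
Import GRing.Theory.
Local Open Scope ring_scope.

(* A formal power series in x_1, x_2, ... is determined by its specialisations
   x_{N+1} = x_{N+2} = ... = 0 for all N.  We represent the colour i+1 by
   i : 'I_N, so the specialisation to N variables is a polynomial in
   {mpoly int[N]} whose variable 'X_i stands for x_{i+1}. *)

Definition properH (V : finType) (e : rel V) (N : nat) (k : {ffun V -> 'I_N}) :=
  [forall a, forall b, e a b ==> (k a != k b)].

Definition XH (V : finType) (e : rel V) (wt : V -> nat) (N : nat)
  : {mpoly int[N]} :=
  \sum_(k : {ffun V -> 'I_N} | properH e k) \prod_(a : V) 'X_(k a) ^+ wt a.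

Inductive ekind := Dashed | Solid | Double.

Definition properG (T : finType) (ek : T -> T -> option ekind) (N : nat)
  (k : {ffun T -> 'I_N}) :=
  [forall x, forall y,
     match ek x y with
     | Some Dashed => k x != k y
     | Some Solid => (nat_of_ord (k x) < nat_of_ord (k y))%N
     | Some Double => (nat_of_ord (k x) <= nat_of_ord (k y))%N
     | None => true
     end].

Definition XG (T : finType) (ek : T -> T -> option ekind) (N : nat)
  : {mpoly int[N]} :=
  \sum_(k : {ffun T -> 'I_N} | properG ek k) \prod_(x : T) 'X_(k x).

(** Vertices: pairs (a, i) with i : 'I_(wt a); the copy of
    C_m (m = wt a) has double edges (a,i) => (a, i+1 mod m) when m >= 2
    (for m = 1 it is a single vertex with no edges).  For each edge ab of H
    there is one dashed edge between v(a) and v(b), oriented from the vertex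
    of smaller enumeration rank to the larger one (the orientation of a
    dashed edge does not affect properness). *)
Definition Gvert (V : finType) (wt : V -> nat) : finType :=
  {a : V & 'I_(wt a)}.

Definition Gedge (V : finType) (e : rel V) (wt : V -> nat)
  (v : forall a : V, 'I_(wt a)) (x y : Gvert wt) : option ekind :=
  if tag x == tag y then
    (if (1 < wt (tag x))%N
        && (nat_of_ord (tagged y) == ((nat_of_ord (tagged x)).+1 %% wt (tag x))%N)
     then Some Double else None)
  else if [&& e (tag x) (tag y), tagged x == v (tag x), tagged y == v (tag y)
           & (nat_of_ord (enum_rank (tag x)) < nat_of_ord (enum_rank (tag y)))%N]
  then Some Dashed else None.

From HB Require Import structures.
From mathcomp Require Import all_boot all_order all_algebra.
From mathcomp.multinomials Require Import mpoly.
Set Implicit Arguments. Unset Strict Implicit.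
Import GRing.Theory.
Local Open Scope ring_scope.

(* Going once around a cycle of double edges forces k(x) <= k(y) <= k(x) for
   any two vertices of that cycle, so a proper colouring of G is constant on
   each copy of C_wt(a).  Proper colourings of G are therefore the colourings
   a |-> k(a) of H pulled back along the copies; the dashed edges make such a
   pullback proper exactly when the colouring of H is, and the copy of a
   contributes x_k(a)^wt(a) to the monomial. *)

Lemma ordS_homo_const (m : nat) (g : 'I_m -> nat) :
  (forall i, (g i <= g (ordS i))%N) -> forall i j, g i = g j.
Proof.
case: m g => [|n] g gS i j; first by case: i.
pose f k := g (inord (k %% n.+1)).
have fS k : (f k <= f k.+1)%N.
  have := gS (inord (k %% n.+1)); congr (_ <= g _)%N; apply: val_inj.
  rewrite /= !inordK ?ltn_mod //.
  by rewrite -[(k %% _).+1]addn1 modnDml addn1.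
have f_homo := homo_leq leqnn leq_trans fS.
have f_period : f n.+1 = f 0%N by rewrite /f modnn mod0n.
suff g_f0 (l : 'I_n.+1) : g l = f 0%N by rewrite !g_f0.
have -> : g l = f l by rewrite /f modn_small // inord_val.
apply/eqP; rewrite eqn_leq (f_homo 0%N l) // andbT -f_period.
exact/f_homo/ltnW.
Qed.

Lemma prodr_tag_const (R : comPzSemiRingType) (I : finType) (n : I -> nat)
    (F : I -> R) :
  \prod_(x : {i : I & 'I_(n i)}) F (tag x) = \prod_i F i ^+ n i.
Proof.
rewrite -(sig_big_dep xpredT (fun _ _ => true) (fun i _ => F i)) /=.
by apply: eq_bigr => i _; rewrite prodr_const card_ord.
Qed.

Section Colourings.
Variables (V : finType) (e : rel V) (wt : V -> nat).
Variables (v : forall a : V, 'I_(wt a)) (N : nat).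

Definition lift_colouring (j : {ffun V -> 'I_N}) : {ffun Gvert wt -> 'I_N} :=
  [ffun x => j (tag x)].

Definition root_colouring (k : {ffun Gvert wt -> 'I_N}) : {ffun V -> 'I_N} :=
  [ffun a => k (Tagged _ (v a))].

Lemma lift_colouringK : cancel lift_colouring root_colouring.
Proof. by move=> j; apply/ffunP => a; rewrite !ffunE. Qed.

Lemma properG_const_on_copies (k : {ffun Gvert wt -> 'I_N}) :
  properG (Gedge e v) k ->
  forall a (i : 'I_(wt a)), k (Tagged _ i) = k (Tagged _ (v a)).
Proof.
move=> /forallP Gk a i; apply/val_inj.
apply: (ordS_homo_const (g := fun i => val (k (Tagged _ i)))) => {}i /=.
have [wt_le1 | wt_gt1] := leqP (wt a) 1.
  suff -> : ordS i = i by [].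
  by apply/val_inj; case: (wt a) i wt_le1 => [|[|]] // [[]].
have := forallP (Gk (Tagged _ i)) (Tagged _ (ordS i)).
by rewrite /Gedge /= eqxx wt_gt1 eqxx.
Qed.

Lemma root_colouringK (k : {ffun Gvert wt -> 'I_N}) :
  properG (Gedge e v) k -> lift_colouring (root_colouring k) = k.
Proof.
move=> Gk; apply/ffunP => -[a i]; rewrite !ffunE /=.
by rewrite (properG_const_on_copies Gk i).
Qed.

Hypothesis e_sym : forall a b : V, e a b = e b a.
Hypothesis e_irr : forall a : V, e a a = false.

Lemma properG_lift (j : {ffun V -> 'I_N}) :
  properG (Gedge e v) (lift_colouring j) = properH e j.
Proof.
apply/forallP/forallP => [Gj a | Hj x].
  apply/forallP => b; apply/implyP => eab.
  have nab : a != b by apply: contraTneq eab => ->; rewrite e_irr.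
  have [ab | ba | /val_inj/enum_rank_inj ab] :=
    ltngtP (enum_rank a) (enum_rank b).
  - have := forallP (Gj (Tagged _ (v a))) (Tagged _ (v b)).
    by rewrite /Gedge /= (negbTE nab) eab !eqxx ab !ffunE.
  - have := forallP (Gj (Tagged _ (v b))) (Tagged _ (v a)).
    by rewrite /Gedge /= eq_sym (negbTE nab) e_sym eab !eqxx ba !ffunE eq_sym.
  - by rewrite ab eqxx in nab.
apply/forallP => y; rewrite /Gedge.
case: eqP => [xy | _]; first by case: ifP => // _; rewrite !ffunE xy.
case: ifP => // /and4P [exy _ _ _]; rewrite !ffunE.
exact: (implyP (forallP (Hj _) _) exy).
Qed.

End Colourings.

Arguments lift_colouring {V wt N}.
Arguments root_colouring {V wt} v {N}.

Theorem mainTheorem13 (V : finType) (e : rel V) (wt : V -> nat)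
  (e_sym : forall a b : V, e a b = e b a) (e_irr : forall a : V, e a a = false)
  (wt_pos : forall a : V, (0 < wt a)%N)
  (v : forall a : V, 'I_(wt a)) (N : nat) :
  XH e wt N = XG (Gedge e v) N.
Proof.
rewrite /XG (reindex lift_colouring) /=.
  apply: eq_big => [j | j _]; first by rewrite properG_lift.
  by rewrite -prodr_tag_const; apply: eq_bigr => x _; rewrite ffunE.
exists (root_colouring v); first by move=> j _; exact: lift_colouringK.
by move=> k; rewrite inE; exact: root_colouringK.
Qed.
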